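(* Let $G$ be a finite group with identity $e$, $R[G]$ its real group algebra, $S=\{x\in R[G]:\sum_gx_g=1,\ x_g\ge0\ \forall g\}$, and let $(p^{[n]}(t))_{n\in\mathbb N}$, $p^{[n]}(t)=\sum_{k=0}^\infty a_k^{[n]}t^k$, be any sequence of real power series with $\sum_k|a_k^{[n]}|<\infty$ for each $n$ and $\lim_{n\to\infty}\sup\{|a_k^{[n]}|:k\ge1\}=0$. Then for every $x\in S$, either neither of the limits $\lim_{n\to\infty}p^{[n]}(x)$, $\lim_{n\to\infty}p^{[n]}(xc_x)$ exists, or both exist and $\lim_{n\to\infty}p^{[n]}(x)=\lim_{n\to\infty}p^{[n]}(xc_x)$.
   Context: For $y\in S$, $p^{[n]}(y)=a_0^{[n]}e+\sum_{k\ge1}a_k^{[n]}y^k$ (convergent); Euclidean topology on $R[G]$. $\mathrm{Supp}(y)=\{g:y_g\ne0\}$; for $x\in S$, $n_x=\min\{k\ge1:(x^k)_e\ne0\}$, $G_x$ is the subgroup generated by $\mathrm{Supp}(x^{n_x})$, and $c_x=\frac1{|G_x|}\sum_{g\in G_x}g$. *)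

From HB Require Import structures.
From mathcomp Require Import all_boot all_order all_algebra all_fingroup.
From mathcomp Require Import all_classical all_reals all_analysis.
Set Implicit Arguments. Unset Strict Implicit. Unset Printing Implicit Defensive.
Import Order.TTheory GRing.Theory Num.Theory numFieldNormedType.Exports.
Local Open Scope ring_scope.
Local Open Scope classical_set_scope.

Section GroupAlgebra.
Variables (R : realType) (gT : finGroupType).

Definition ga := {ffun gT -> R}.

Definition ga_one : ga := [ffun g => if g == 1%g then 1 else 0].

Definition ga_mul (x y : ga) : ga :=
  [ffun g => \sum_(h : gT) x h * y (h^-1 * g)%g].

Definition ga_pow (y : ga) (k : nat) : ga := iter k (ga_mul y) ga_one.

Definition in_S (x : ga) : Prop :=
  \sum_(g : gT) x g = 1 /\ forall g, 0 <= x g.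

(* p(y) = a_0 e + sum_{k>=1} a_k y^k, evaluated coordinatewise as the limit
   of partial sums (convergent for y in S when sum_k |a_k| < oo). *)
Definition peval (a : nat -> R) (y : ga) : ga :=
  [ffun g => limn (series (fun k => a k * ga_pow y k g))].

Definition supp (y : ga) : {set gT} := [set g | y g != 0].

Definition n_x (x : ga) : nat :=
  match pselect (exists k, (0 < k)%N && (ga_pow x k 1%g != 0)) with
  | left H => ex_minn H
  | right _ => 0%N
  end.

Definition G_x (x : ga) : {group gT} := <<supp (ga_pow x (n_x x))>>%G.

Definition c_x (x : ga) : ga :=
  [ffun g => if g \in G_x x then (#|G_x x|%:R)^-1 else 0].

(* convergence in R[G] (Euclidean topology = coordinatewise convergence) *)
Definition ga_cvg (u : nat -> ga) (L : ga) : Prop :=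
  forall g, (fun n => u n g) @ \oo --> L g.

End GroupAlgebra.

(* Let S = supp x, n = n_x and H = G_x = <<S^n>>.  Since 1 lies in S^n, the
   powers S^n, S^2n, ... increase to H, so for some M the probability vector
   z = x^M has support exactly H, and by Doeblin's argument z^q converges
   geometrically, in l^1, to the uniform measure c_x on H.  Every s in S
   normalises H, hence x commutes with the idempotent c_x and
   (x c_x)^k = x^k c_x.  Thus the coordinates of x^k - (x c_x)^k are summable
   in k, and |p^[n](x) - p^[n](x c_x)| is at most a constant times
   sup_(k >= 1) |a_k^[n]|, which tends to 0. *)

From HB Require Import structures.
From mathcomp Require Import all_boot all_order all_algebra all_fingroup.
From mathcomp Require Import all_classical all_reals all_analysis.
From mathcomp Require Import ring lra.
Set Implicit Arguments. Unset Strict Implicit. Unset Printing Implicit Defensive.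
Import Order.TTheory GRing.Theory Num.Theory numFieldNormedType.Exports.
Local Open Scope ring_scope.
Local Open Scope classical_set_scope.

Section GroupAlgebraRing.
Variables (R : realType) (gT : finGroupType).
Local Notation ga := (ga R gT).
Implicit Types x y : ga.

Lemma ga_mulE x y g : ga_mul x y g = \sum_(h : gT) x h * y (h^-1 * g)%g.
Proof. by rewrite ffunE. Qed.

Lemma ga_mulA : associative (@ga_mul R gT).
Proof.
move=> x y z; apply/esym/ffunP => g; rewrite !ga_mulE.
under eq_bigr do rewrite ga_mulE big_distrl.
rewrite exchange_big; apply: eq_bigr => h _ /=.
rewrite ga_mulE big_distrr (reindex_inj (mulgI h)); apply: eq_bigr => k _ /=.
by rewrite mulKg invMg mulgA mulrA.
Qed.

Lemma ga_mul1l : left_id (ga_one R gT) (@ga_mul R gT).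
Proof.
move=> y; apply/ffunP => g.
rewrite ga_mulE (bigD1 1%g) //= big1 => [|h /negbTE h1].
  by rewrite ffunE eqxx mul1r invg1 mul1g addr0.
by rewrite ffunE h1 mul0r.
Qed.

Lemma ga_mul1r : right_id (ga_one R gT) (@ga_mul R gT).
Proof.
move=> y; apply/ffunP => g; rewrite ga_mulE (bigD1 g) //= big1 => [|h hg].
  by rewrite ffunE mulVg eqxx mulr1 addr0.
by rewrite ffunE -eq_mulVg1 (negbTE hg) mulr0.
Qed.

Lemma ga_mulDl : left_distributive (@ga_mul R gT) +%R.
Proof.
move=> x y z; apply/ffunP => g; rewrite !ffunE -big_split.
by apply: eq_bigr => h _; rewrite ffunE mulrDl.
Qed.

Lemma ga_mulDr : right_distributive (@ga_mul R gT) +%R.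
Proof.
move=> x y z; apply/ffunP => g; rewrite !ffunE -big_split.
by apply: eq_bigr => h _; rewrite ffunE mulrDr.
Qed.

Lemma ga_one_neq0 : ga_one R gT != 0.
Proof.
by apply/eqP => /ffunP/(_ 1%g)/eqP; rewrite !ffunE eqxx oner_eq0.
Qed.

(* The pointwise ring structure that [ga] inherits from [{ffun gT -> R}] is
   overridden by the convolution ring structure. *)
HB.instance Definition _ := GRing.Zmodule.on ga.
HB.instance Definition _ := GRing.Zmodule_isNzRing.Build ga
  ga_mulA ga_mul1l ga_mul1r ga_mulDl ga_mulDr ga_one_neq0.
HB.instance Definition _ := GRing.Lmodule.on ga.

Lemma ga_subE x y g : (x - y) g = x g - y g.
Proof. by rewrite !ffunE. Qed.

Lemma ga_scaleE (r : R) x g : (r *: x) g = r * x g.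
Proof. by rewrite ffunE. Qed.

Lemma ga_scalerAl (r : R) x y : r *: (x * y) = (r *: x) * y.
Proof.
apply/ffunP => g; rewrite ga_scaleE !ga_mulE big_distrr.
by apply: eq_bigr => h _ /=; rewrite ga_scaleE mulrA.
Qed.

HB.instance Definition _ := GRing.Lmodule_isLalgebra.Build R ga ga_scalerAl.

Lemma ga_scalerAr (r : R) x y : r *: (x * y) = x * (r *: y).
Proof.
apply/ffunP => g; rewrite ga_scaleE !ga_mulE big_distrr.
by apply: eq_bigr => h _ /=; rewrite ga_scaleE mulrCA.
Qed.

HB.instance Definition _ := GRing.Lalgebra_isAlgebra.Build R ga ga_scalerAr.

Lemma ga_powE x k : ga_pow x k = x ^+ k.
Proof. by elim: k => // k IH; rewrite exprS -IH. Qed.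

Lemma pevalE (a : nat -> R) x g :
  peval a x g = limn (series (fun k => a k * (x ^+ k) g)).
Proof. by rewrite ffunE; under eq_fun do rewrite ga_powE. Qed.

End GroupAlgebraRing.

Section SetPowers.
Local Open Scope group_scope.
Variable gT : finGroupType.
Implicit Types A : {set gT}.

Lemma mem_expgs A a k : a \in A -> a ^+ k \in A ^+ k.
Proof. by move=> Aa; elim: k => [|k IH]; rewrite ?set11 // !expgS mem_mulg. Qed.

Lemma expgs_sub_gen A k : A ^+ k \subset <<A>>.
Proof.
by elim: k => [|k IH]; rewrite ?sub1G // expgS mul_subG ?subset_gen.
Qed.

Lemma gen_expgs_eq A : 1 \in A -> exists N, <<A>> = A ^+ N.+1.
Proof.
move=> A1; have [N] := gen_expgs A.
have -> : 1 |: A = A by apply/setP => g; rewrite !inE; case: eqP => // ->.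
move=> genA; exists N; apply/eqP; rewrite finset.eqEsubset expgs_sub_gen andbT.
by rewrite genA expgS mulg_subr.
Qed.

Variables (S : {set gT}) (n : nat).
Hypothesis n_gt0 : (0 < n)%N.
Hypothesis S_n1 : 1 \in S ^+ n.

(* Conjugating [w \in S^n] by [s \in S] gives
   [s w s^-1 = (s w t) (s t)^-1] with [t \in S^(n-1)], a quotient of elements
   of [S^(2n)] and [S^n]. *)
Lemma subset_norm_gen_expgs : S \subset 'N(<<S ^+ n>>).
Proof.
have en : n = n.-1.+1 by rewrite prednK.
have [t St] : exists t, t \in S ^+ n.-1.
  by move: S_n1; rewrite {1}en expgSr => /mulsgP[t r St _ _]; exists t.
apply/fintype.subsetP => s Ss; rewrite -groupV; apply/normP/eqP.
rewrite eqEcard cardJg leqnn andbT -genJ gen_subG; apply/fintype.subsetP => w.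
rewrite mem_conjg invgK => Snw.
have -> : w = (s * w ^ s * t) * (s * t)^-1.
  by rewrite invMg mulgA mulgK conjgE !mulgA mulgV mul1g mulgK.
rewrite groupM ?groupV //; last by rewrite mem_gen // en expgS mem_mulg.
apply: (fintype.subsetP (expgs_sub_gen _ 2)).
have -> : S ^+ n ^+ 2 = S * (S ^+ n * S ^+ n.-1).
  by rewrite -expgnA -expgnDr -expgS -addnS -en muln2 addnn.
by rewrite -mulgA !mem_mulg.
Qed.

End SetPowers.

Section MassNorm.
Variables (R : realType) (gT : finGroupType).
Local Notation ga := (ga R gT).
Implicit Types x y : ga.

Definition mass x : R := \sum_(g : gT) x g.
Definition l1norm x : R := \sum_(g : gT) `|x g|.

Lemma sum_mulgI (F : gT -> R) h :
  \sum_(g : gT) F (h^-1 * g)%g = \sum_(g : gT) F g.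
Proof. by rewrite (reindex_inj (mulgI h)); apply: eq_bigr => g _; rewrite mulKg. Qed.

Lemma massM x y : mass (x * y) = mass x * mass y.
Proof.
rewrite /mass; under eq_bigr do rewrite ga_mulE.
rewrite exchange_big big_distrl; apply: eq_bigr => h _ /=.
by rewrite -big_distrr (sum_mulgI (fun g => y g)).
Qed.

Lemma mass1 : mass 1 = 1.
Proof.
rewrite /mass (bigD1 1%g) //= big1 => [|g /negbTE g1]; last by rewrite ffunE g1.
by rewrite ffunE eqxx addr0.
Qed.

Lemma massB x y : mass (x - y) = mass x - mass y.
Proof. by rewrite /mass -sumrB; apply: eq_bigr => g _; rewrite ga_subE. Qed.

Lemma massZ (r : R) x : mass (r *: x) = r * mass x.
Proof. by rewrite /mass big_distrr; apply: eq_bigr => g _; rewrite ga_scaleE. Qed.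

Lemma l1normM x y : l1norm (x * y) <= l1norm x * l1norm y.
Proof.
rewrite /l1norm; under eq_bigr do rewrite ga_mulE.
apply: (@le_trans _ _ (\sum_(g : gT) \sum_(h : gT) `|x h| * `|y (h^-1 * g)%g|)).
  apply: ler_sum => g _; apply: le_trans (ler_norm_sum _ _ _) _.
  by apply: ler_sum => h _; rewrite normrM.
rewrite exchange_big big_distrl; apply: ler_sum => h _ /=.
by rewrite -big_distrr (sum_mulgI (fun g => `|y g|)).
Qed.

Lemma l1normB x y : l1norm (x - y) <= l1norm x + l1norm y.
Proof.
rewrite /l1norm -big_split; apply: ler_sum => g _ /=.
by rewrite ga_subE ler_normB.
Qed.

Lemma ler_norm_l1norm x g : `|x g| <= l1norm x.
Proof. by rewrite /l1norm (bigD1 g) //= lerDl sumr_ge0. Qed.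

Lemma l1norm_ge0_mass x : (forall g, 0 <= x g) -> l1norm x = mass x.
Proof. by move=> x_ge0; apply: eq_bigr => g _; rewrite ger0_norm. Qed.

Lemma mass_in_S x : in_S x -> mass x = 1.
Proof. by case. Qed.

Lemma in_S1 : in_S (1 : ga).
Proof. by split; [exact: mass1 | move=> g; rewrite ffunE; case: ifP]. Qed.

Lemma in_SM x y : in_S x -> in_S y -> in_S (x * y).
Proof.
move=> Sx Sy; split; first by rewrite -/(mass _) massM !mass_in_S ?mulr1.
have [[_ x_ge0] [_ y_ge0]] := (Sx, Sy).
by move=> g; rewrite ga_mulE sumr_ge0 // => h _; rewrite mulr_ge0.
Qed.

Lemma in_SX x k : in_S x -> in_S (x ^+ k).
Proof.
by move=> Sx; elim: k => [|k IH]; [exact: in_S1 | rewrite exprS; exact: in_SM].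
Qed.

Lemma l1norm_in_S x : in_S x -> l1norm x = 1.
Proof. by move=> [x1 x_ge0]; rewrite l1norm_ge0_mass. Qed.

Lemma in_S_norm_le1 x g : in_S x -> `|x g| <= 1.
Proof. by move=> Sx; rewrite -(l1norm_in_S Sx) ler_norm_l1norm. Qed.

Lemma supp_mul x y : in_S x -> in_S y -> supp (x * y) = (supp x * supp y)%g.
Proof.
move=> [_ x_ge0] [_ y_ge0]; apply/setP => g.
rewrite inE ga_mulE psumr_neq0 => [|h _]; last by rewrite mulr_ge0.
apply/hasP/mulsgP => [[h _ /=]|[a b]].
  move=> xy_gt0; exists h (h^-1 * g)%g; rewrite ?inE ?mulKVg //.
    by apply: contraTneq xy_gt0 => ->; rewrite mul0r ltxx.
  by apply: contraTneq xy_gt0 => ->; rewrite mulr0 ltxx.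
rewrite !inE => xa yb ->; exists a; first exact: mem_index_enum.
by rewrite /= mulKg mulr_gt0 // lt0r ?xa ?yb ?x_ge0 ?y_ge0.
Qed.

Lemma suppX x k : in_S x -> supp (x ^+ k) = (supp x ^+ k)%g.
Proof.
move=> Sx; elim: k => [|k IH].
  by apply/setP => g; rewrite !inE ffunE; case: (g == 1%g); rewrite ?oner_eq0 ?eqxx.
by rewrite exprS expgS supp_mul ?IH //; exact: in_SX.
Qed.

End MassNorm.

Section Averaging.
Variables (R : realType) (gT : finGroupType) (H : {group gT}).
Local Notation ga := (ga R gT).
Implicit Types v z : ga.

Definition avg : ga := [ffun g => if g \in H then #|H|%:R^-1 else 0].

Lemma avgE g : avg g = if g \in H then #|H|%:R^-1 else 0.
Proof. by rewrite ffunE. Qed.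

Lemma in_S_avg : in_S avg.
Proof.
split=> [|g]; last by rewrite avgE; case: ifP.
under eq_bigr do rewrite avgE.
rewrite -big_mkcond /= sumr_const -[_ *+ _]mulr_natr mulVf //.
by rewrite pnatr_eq0 -lt0n cardG_gt0.
Qed.

Lemma supp_avg : supp avg = H.
Proof.
apply/setP => g; rewrite inE avgE; case: ifP; rewrite ?eqxx //.
by rewrite invr_eq0 pnatr_eq0 -lt0n cardG_gt0.
Qed.

Lemma sum_mulgV (F : gT -> R) g :
  \sum_(h : gT) F h = \sum_(h : gT) F (g * h^-1)%g.
Proof. by apply: reindex_inj => a b /mulgI; exact: invg_inj. Qed.

Lemma mulr_avg v : in_S v -> supp v \subset H -> v * avg = avg.
Proof.
move=> [v1 _] vH; apply/ffunP => g.
rewrite ga_mulE -[avg g]mul1r -v1 big_distrl.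
apply: eq_bigr => h _ /=; have [-> | vh] := eqVneq (v h) 0; first by rewrite !mul0r.
have Hh : h \in H by apply: (fintype.subsetP vH); rewrite inE.
by rewrite !avgE groupMl ?groupV.
Qed.

Lemma avg_mulr v : in_S v -> supp v \subset H -> avg * v = avg.
Proof.
move=> [v1 _] vH; apply/ffunP => g.
rewrite ga_mulE -[avg g]mulr1 -v1 big_distrr.
rewrite (sum_mulgV _ g); apply: eq_bigr => h _ /=; rewrite invMg invgK mulgVK.
have [-> | vh] := eqVneq (v h) 0; first by rewrite !mulr0.
have Hh : h \in H by apply: (fintype.subsetP vH); rewrite inE.
by rewrite !avgE groupMr ?groupV.
Qed.

Lemma avg_idem : avg * avg = avg.
Proof. by rewrite mulr_avg ?supp_avg //; exact: in_S_avg. Qed.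

Lemma avg_comm v : supp v \subset ('N(H))%g -> GRing.comm v avg.
Proof.
move=> vN; apply/ffunP => g; rewrite !ga_mulE (sum_mulgV (fun h => avg h * _) g).
apply: eq_bigr => h _; rewrite invMg invgK mulgVK.
have [-> | vh] := eqVneq (v h) 0; first by rewrite mul0r mulr0.
have Nh : (h^-1 \in 'N(H))%g.
  by rewrite groupV; apply: (fintype.subsetP vN); rewrite inE.
have -> : (g * h^-1 = (h^-1 * g) ^ h^-1)%g by rewrite conjgE invgK mulgA mulKVg.
by rewrite !avgE memJ_norm // mulrC.
Qed.

Lemma expr_mul_avg z q : in_S z -> supp z \subset H -> z ^+ q * avg = avg.
Proof.
move=> Sz zH; elim: q => [|q IH]; first by rewrite mul1r.
by rewrite exprSr -mulrA mulr_avg.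
Qed.

(* Doeblin's argument: [z >= d avg] with [d > 0], and since
   [(z ^+ q - avg) * avg = 0], right multiplication of [z ^+ q - avg] by [z]
   is multiplication by the remainder [z - d avg], of l^1-norm [1 - d]. *)
Lemma l1norm_expr_sub_avg z : in_S z -> supp z = H ->
  exists2 rho : R, 0 <= rho < 1 & forall q, l1norm (z ^+ q - avg) <= 2 * rho ^+ q.
Proof.
move=> Sz zH; have [_ z_ge0] := Sz; have zH_sub : supp z \subset H by rewrite zH.
pose m := \prod_(h in H) z h.
have Hz_gt0 h : h \in H -> 0 < z h by rewrite -zH inE => zh; rewrite lt0r zh z_ge0.
have m_gt0 : 0 < m by apply: prodr_gt0.
have m_le h : h \in H -> m <= z h.
  move=> Hh; rewrite /m (bigD1 h) //= ler_piMr ?z_ge0 // prodr_ile1 // => j _.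
  by rewrite z_ge0 -(ger0_norm (z_ge0 j)) in_S_norm_le1.
pose d := #|H|%:R * m; pose E := z - d *: avg.
have H_neq0 : #|H|%:R != 0 :> R by rewrite pnatr_eq0 -lt0n cardG_gt0.
have E_ge0 g : 0 <= E g.
  rewrite ga_subE ga_scaleE avgE; case: ifP => Hg; last by rewrite mulr0 subr0.
  by rewrite mulrAC mulfV // mul1r subr_ge0 m_le.
have massE : mass E = 1 - d.
  by rewrite massB massZ !mass_in_S ?mulr1 //; exact: in_S_avg.
have d_gt0 : 0 < d by rewrite mulr_gt0 // ltr0n cardG_gt0.
have d_le1 : 0 <= 1 - d by rewrite -massE sumr_ge0.
have rec q : z ^+ q.+1 - avg = (z ^+ q - avg) * E.
  rewrite mulrBr !mulrBl -!scalerAr expr_mul_avg // avg_idem avg_mulr //.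
  by rewrite -exprSr subrr subr0.
exists (1 - d); first by rewrite d_le1 /= ltrBlDr ltrDl.
elim => [|q IH].
  rewrite expr0 mulr1; apply: le_trans (l1normB _ _) _.
  by rewrite (l1norm_in_S (in_S1 _ _)) (l1norm_in_S in_S_avg).
rewrite rec exprSr mulrA; apply: le_trans (l1normM _ _) _.
by rewrite (l1norm_ge0_mass E_ge0) massE ler_wpM2r.
Qed.

End Averaging.

Section PowerSeries.
Variable R : realType.
Implicit Types a b : nat -> R.

Lemma sum_expr_divn_le (rho : R) (M K : nat) : 0 <= rho < 1 -> (0 < M)%N ->
  \sum_(0 <= k < K) rho ^+ (k %/ M) <= M%:R / (1 - rho).
Proof.
move=> /andP[rho_ge0 rho_lt1] M_gt0; have rho1_gt0 : 0 < 1 - rho by rewrite subr_gt0.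
have blocks Q :
    (\sum_(0 <= k < Q * M) rho ^+ (k %/ M)) * (1 - rho) = M%:R * (1 - rho ^+ Q).
  elim: Q => [|Q IH]; first by rewrite mul0n big_geq // mul0r expr0 subrr mulr0.
  rewrite mulSn addnC (big_cat_nat _ (n := (Q * M)%N)) ?leq_addr //= mulrDl IH.
  rewrite -{1}(add0n (Q * M)%N) big_addn addKn.
  rewrite (eq_big_nat _ _ (F2 := fun=> rho ^+ Q)); last first.
    by move=> i /andP[_ iM]; rewrite addnC divnMDl // divn_small // addn0.
  rewrite sumr_const_nat subn0 -mulr_natl exprS; ring.
apply: (@le_trans _ _ (\sum_(0 <= k < K * M) rho ^+ (k %/ M))).
  rewrite [X in _ <= X](big_cat_nat _ (n := K)) //= ?leq_pmulr // lerDl.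
  by apply: sumr_ge0 => k _; exact: exprn_ge0.
rewrite ler_pdivlMr // blocks ler_piMr ?ler0n // lerBlDr lerDl.
exact: exprn_ge0.
Qed.

Lemma abs_le_sup_tail b k : cvgn (series (fun k => `|b k|)) -> (1 <= k)%N ->
  `|b k| <= sup [set `|b k| | k in [set k : nat | (1 <= k)%N]].
Proof.
move=> b_sum k_ge1; apply: ub_le_sup; last by exists k.
exists (limn (series (fun k => `|b k|))) => _ [j _ <-].
have nd : nondecreasing_seq (series (fun k => `|b k|)).
  by apply/nondecreasing_seqP => m; rewrite /series /= big_nat_recr //= lerDl.
apply: le_trans (nondecreasing_cvgn_le nd b_sum j.+1).
by rewrite /series /= big_nat_recr //= lerDr sumr_ge0.
Qed.

Variable gT : finGroupType.
Implicit Types x y : ga R gT.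

Lemma is_cvg_series_coord a x g : cvgn (series (fun k => `|a k|)) -> in_S x ->
  cvgn (series (fun k => a k * (x ^+ k) g)).
Proof.
move=> a_sum Sx; apply: normed_cvg; apply: series_le_cvg a_sum => // k.
  exact: normr_ge0.
by rewrite /= normrM ler_piMr // (in_S_norm_le1 _ (in_SX k Sx)).
Qed.

Lemma peval_sub_le a x y g s B : cvgn (series (fun k => `|a k|)) ->
  in_S x -> in_S y -> (forall k, (1 <= k)%N -> `|a k| <= s) ->
  (forall K, \sum_(0 <= k < K) `|(x ^+ k) g - (y ^+ k) g| <= B) ->
  `|peval a x g - peval a y g| <= s * B.
Proof.
move=> a_sum Sx Sy a_le sum_le; have s_ge0 : 0 <= s by apply: le_trans (a_le 1%N _).
pose f k := a k * (x ^+ k) g; pose h k := a k * (y ^+ k) g.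
have coord_sub_le1 k : `|(x ^+ k) g - (y ^+ k) g| <= 1.
  have [[_ /(_ g) xk_ge0] [_ /(_ g) yk_ge0]] := (in_SX k Sx, in_SX k Sy).
  have := in_S_norm_le1 g (in_SX k Sx); have := in_S_norm_le1 g (in_SX k Sy).
  rewrite (ger0_norm xk_ge0) (ger0_norm yk_ge0) ler_norml => ? ?.
  by apply/andP; split; lra.
have cn : cvgn [normed series (f - h)].
  apply: series_le_cvg a_sum => // k; first exact: normr_ge0.
  by rewrite /= fctE /f /h -mulrBr normrM ler_piMr ?coord_sub_le1.
have cf := is_cvg_series_coord (g := g) a_sum Sx.
have ch := is_cvg_series_coord (g := g) a_sum Sy.
rewrite !pevalE -lim_seriesB //.
apply: le_trans (lim_series_norm cn) _; apply: limr_le cn _; apply: nearW => K /=.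
apply: (@le_trans _ _ (\sum_(0 <= k < K) s * `|(x ^+ k) g - (y ^+ k) g|)).
  apply: ler_sum => -[|k] _ /=; rewrite fctE /f /h -mulrBr normrM.
    by rewrite !expr0 subrr normr0 !mulr0.
  by rewrite ler_wpM2r ?a_le.
by rewrite -big_distrr ler_wpM2l.
Qed.

End PowerSeries.

Section ReturnGroup.
Variables (R : realType) (gT : finGroupType) (x : ga R gT).
Hypothesis Sx : in_S x.
Local Notation S := (supp x).
Local Notation n := (n_x x).
Local Notation c := (c_x x).

Lemma n_x_spec : (0 < n)%N /\ (1 \in S ^+ n)%g.
Proof.
have mem1 k : (ga_pow x k 1%g != 0) = (1 \in S ^+ k)%g.
  by rewrite ga_powE -suppX // inE.
have [g xg] : exists g, x g != 0.
  apply: contrapT => no_g; move: (mass_in_S Sx); rewrite /mass big1 => [/eqP|g _].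
    by rewrite eq_sym oner_eq0.
  by have [//|xg] := eqVneq (x g) 0; case: no_g; exists g.
have ret : exists k, (0 < k)%N && (ga_pow x k 1%g != 0).
  have Sg : g \in S by rewrite inE.
  by exists #[g]%g; rewrite order_gt0 mem1 -(expg_order g) mem_expgs.
rewrite /n_x; case: pselect => // ret'.
by case: ex_minnP => k /andP[k_gt0]; rewrite mem1.
Qed.

Lemma G_xE : G_x x = <<S ^+ n>>%G.
Proof. by rewrite /G_x ga_powE suppX. Qed.

Lemma c_x_comm : GRing.comm x c.
Proof.
have [n_gt0 S_n1] := n_x_spec.
by apply: avg_comm; rewrite G_xE subset_norm_gen_expgs.
Qed.

Lemma exprS_mul_c_x k : (x * c) ^+ k.+1 = x ^+ k.+1 * c.
Proof.
rewrite exprMn_comm; last exact: c_x_comm.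
congr (_ * _); elim: k => // k IH; rewrite exprS IH; exact: avg_idem.
Qed.

Lemma l1norm_expr_sub_mul_c_x : exists2 M : nat, (0 < M)%N &
  exists2 rho : R, 0 <= rho < 1 &
  forall k, l1norm (x ^+ k - x ^+ k * c) <= 2 * rho ^+ (k %/ M).
Proof.
have [n_gt0 S_n1] := n_x_spec.
have [N genE] := gen_expgs_eq S_n1.
pose M := (n * N.+1)%N; pose z := x ^+ M.
have Sz : in_S z by exact: in_SX.
have zE : supp z = G_x x by rewrite suppX // expgnA G_xE /= genE.
have [rho rho01 decay] := l1norm_expr_sub_avg Sz zE.
exists M; first by rewrite muln_gt0 n_gt0.
exists rho => // k.
have zH : supp z \subset G_x x by rewrite zE.
have -> : x ^+ k - x ^+ k * c = x ^+ (k %% M) * (z ^+ (k %/ M) - c).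
  rewrite {1 2}(divn_eq k M) addnC exprD mulnC exprM -mulrA.
  by rewrite expr_mul_avg // mulrBr.
apply: le_trans (l1normM _ _) _.
by rewrite l1norm_in_S ?mul1r ?decay //; exact: in_SX.
Qed.

Lemma sum_coord_sub_expr_mul_c_x_le : exists B : R, forall g K,
  \sum_(0 <= k < K) `|(x ^+ k) g - ((x * c) ^+ k) g| <= B.
Proof.
have [M M_gt0 [rho rho01 decay]] := l1norm_expr_sub_mul_c_x.
exists (2 * (M%:R / (1 - rho))) => g K.
apply: (@le_trans _ _ (\sum_(0 <= k < K) 2 * rho ^+ (k %/ M))); last first.
  by rewrite -big_distrr ler_wpM2l // sum_expr_divn_le.
apply: ler_sum => -[|k] _.
  by rewrite !expr0 subrr normr0 mulr_ge0 // exprn_ge0 // (andP rho01).1.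
rewrite exprS_mul_c_x -ga_subE.
exact: le_trans (ler_norm_l1norm _ _) (decay _).
Qed.

End ReturnGroup.

Theorem lemma3 (R : realType) (gT : finGroupType) (a : nat -> nat -> R)
  (habs : forall n, cvgn (series (fun k => `|a n k|)))
  (hsup : (fun n => sup [set `|a n k| | k in [set k : nat | (1 <= k)%N]])
            @ \oo --> (0 : R))
  (x : ga R gT) (hx : in_S x) :
  let u := fun n => peval (a n) x in
  let v := fun n => peval (a n) (ga_mul x (c_x x)) in
  (~ (exists L, ga_cvg u L) /\ ~ (exists L, ga_cvg v L)) \/
  (exists L, ga_cvg u L /\ ga_cvg v L).
Proof.
move=> u v; have [B sum_le] := sum_coord_sub_expr_mul_c_x_le hx.
have Sxc : in_S (x * c_x x) by apply: in_SM hx (in_S_avg _ _).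
pose s n := sup [set `|a n k| | k in [set k : nat | (1 <= k)%N]].
have sB0 : (fun n => s n * B) @ \oo --> 0.
  by rewrite -(mul0r B); apply: cvgM => //; exact: cvg_cst.
have uv0 g : (fun n => u n g - v n g) @ \oo --> 0.
  apply: (squeeze_cvgr (f := fun n => - (s n * B)) (h := fun n => s n * B)) => //.
    apply: nearW => n; rewrite -ler_norml.
    apply: peval_sub_le (habs n) hx Sxc _ (sum_le g) => k.
    exact: abs_le_sup_tail (habs n).
  by rewrite -oppr0; apply: cvgN.
have vu0 g : (fun n => v n g - u n g) @ \oo --> 0.
  by rewrite -oppr0; under eq_fun do rewrite -opprB; apply: cvgN.
have [[L uL]|u_div] := pselect (exists L, ga_cvg u L).
  by right; exists L; split=> // g; apply: cvg_sub0 (vu0 g) (uL g).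
left; split=> // -[L vL]; apply: u_div; exists L => g.
exact: cvg_sub0 (uv0 g) (vL g).
Qed.
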